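(* Let $\mathcal{V},\mathcal{W}$ be real, separable, infinite-dimensional Hilbert spaces, fix $c>0$ and $p\in[1,\infty]$, and let $\mathcal{X}=\{v\in\mathcal{V}:\|v\|\le1\}$, $\mathcal{Y}=\{w\in\mathcal{W}:\|w\|\le c\}$, $\mathcal{F}_p=\{f\in S_p(\mathcal{V},\mathcal{W}):\|f\|_p\le c\}$. Then for every $T\in\mathbb{N}$, \[\inf_{\mathcal{A}}\mathtt{R}_{\mathcal{A}}(T,\mathcal{F}_p)\ge c^2\,T^{1-\frac1p}\] (with $1/p=0$ for $p=\infty$), the infimum being over all (possibly randomized) online learning algorithms. In particular $\mathcal{F}_\infty$ is not online learnable.
   Context: For a compact linear operator $f:\mathcal{V}\to\mathcal{W}$ with singular values $(s_n(f))_{n\ge1}$, $\|f\|_p=(\sum_n s_n(f)^p)^{1/p}$ for $p\in[1,\infty)$ and $\|f\|_\infty=\sup_n s_n(f)$; $S_p(\mathcal{V},\mathcal{W})$ is the set of compact linear operators with $\|f\|_p<\infty$. Online protocol: for $t=1,\dots,T$, an adversary picks $(x_t,y_t)\in\mathcal{X}\times\mathcal{Y}$ and reveals $x_t$; the learner $\mathcal{A}$, using past labeled examples and $x_t$ (and possibly internal randomness), predicts $\mathcal{A}(x_t)\in\mathcal{Y}$; then $y_t$ is revealed, with loss $\|\mathcal{A}(x_t)-y_t\|^2$. The regret is \[\mathtt{R}_{\mathcal{A}}(T,\mathcal{F})=\sup_{(x_1,y_1),\dots,(x_T,y_T)}\mathbb{E}\Big[\sum_{t=1}^T\|\mathcal{A}(x_t)-y_t\|^2-\inf_{f\in\mathcal{F}}\sum_{t=1}^T\|f(x_t)-y_t\|^2\Big].\]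 A class $\mathcal{F}$ is online learnable if some algorithm has regret that is a non-decreasing sublinear function of $T$. *)

From mathcomp Require Import all_boot all_order all_algebra.
From mathcomp Require Import all_classical all_reals all_analysis.
Set Implicit Arguments. Unset Strict Implicit. Unset Printing Implicit Defensive.
Import Order.TTheory GRing.Theory Num.Theory.
Import numFieldNormedType.Exports.
Local Open Scope classical_set_scope.
Local Open Scope ring_scope.

Section Defs.
Variable R : realType.

Definition inner_product (V : normedModType R) (ip : V -> V -> R) : Prop :=
  [/\ (forall u v, ip u v = ip v u),
      (forall (a : R) (u v w : V), ip (a *: u + v) w = a * ip u w + ip v w)
    & (forall v, ip v v = `|v| ^+ 2)].

(* A real Hilbert space is a complete normed space (completeNormedModType)
   whose norm comes from an inner product [ip] satisfying [inner_product ip]. *)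

Definition separable (V : completeNormedModType R) : Prop :=
  exists D : set V, countable D /\ closure D = setT.

Definition infinite_dimensional (V : completeNormedModType R) : Prop :=
  forall (n : nat) (e : 'I_n -> V),
    exists v : V, forall a : 'I_n -> R, v <> \sum_(i < n) a i *: e i.

Definition linear_op (V W : normedModType R) (f : V -> W) : Prop :=
  forall (a : R) (u v : V), f (a *: u + v) = a *: f u + f v.

Definition compact_op (V W : normedModType R) (f : V -> W) : Prop :=
  linear_op f /\ compact (closure (f @` [set v : V | `|v| <= 1])).

Definition orthonormal (V : normedModType R) (ip : V -> V -> R) (e : nat -> V)
  : Prop := forall i j : nat, ip (e i) (e j) = (i == j)%:R.

(* [s] (indexed from 0, i.e. s n = s_{n+1}(f) in the paper) is the sequence of
   singular values of [f]: the Schmidt representation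
     f v = sum_n s_n <v, e_n> u_n
   with orthonormal (e_n), (u_n) and s nonnegative, nonincreasing
   (padded with zeros if f has finite rank).  This determines s uniquely
   (s_n^2 are the eigenvalues of f^* f in decreasing order, with multiplicity). *)
Definition singular_values (V W : normedModType R)
    (ipV : V -> V -> R) (ipW : W -> W -> R) (f : V -> W) (s : nat -> R) : Prop :=
  (forall n, 0 <= s n) /\ (forall n, s n.+1 <= s n) /\
  exists (e : nat -> V) (u : nat -> W),
    [/\ orthonormal ipV e, orthonormal ipW u &
        forall v : V, series (fun n => (s n * ipV v (e n)) *: u n) @ \oo --> f v].

Definition schatten_norm (p : \bar R) (s : nat -> R) : \bar R :=
  match p with
  | r%:E => ((\sum_(0 <= n <oo) ((s n) `^ r)%:E) `^ (r^-1))%E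
  | _ => ereal_sup (range (fun n => (s n)%:E))
  end.

Definition Fp (V W : normedModType R) (ipV : V -> V -> R) (ipW : W -> W -> R)
    (p : \bar R) (c : R) : set (V -> W) :=
  [set f | compact_op f /\
     exists s, singular_values ipV ipW f s /\ (schatten_norm p s <= c%:E)%E].

(* A (possibly randomized) online learner: its internal randomness is a point
   omega of a probability space; given omega, the past labeled examples and the
   current instance x_t it predicts an element of W. *)
Definition learner (T : Type) (V W : Type) := T -> seq (V * W) -> V -> W.

(* Validity: predictions lie in Y = {w : |w| <= c}, and the prediction is a
   (Borel) random variable: omega |-> |A omega h x - w| measurable for every w
   (equivalent to Borel measurability into the separable space W). *)
Definition valid_learner (V W : normedModType R) (d : measure_display)
    (Om : measurableType d) (P : probability Om R) (c : R)
    (A : learner Om V W) : Prop :=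
  (forall om h x, `|A om h x| <= c) /\
  (forall h x (w : W), measurable_fun setT (fun om => `|A om h x - w|)).

Definition history (V W : Type) (x : nat -> V) (y : nat -> W) (t : nat)
  : seq (V * W) := [seq (x i, y i) | i <- iota 0 t].

Definition regret (V W : normedModType R) (d : measure_display)
    (Om : measurableType d) (P : probability Om R) (A : learner Om V W)
    (c : R) (F : set (V -> W)) (T : nat) : \bar R :=
  ereal_sup [set r : \bar R | exists (x : nat -> V) (y : nat -> W),
    [/\ (forall t, `|x t| <= 1), (forall t, `|y t| <= c) &
     r = ((\int[P]_om (\sum_(t < T) `|A om (history x y t) (x t) - y t| ^+ 2)%:E)
          - ereal_inf [set (\sum_(t < T) `|f (x t) - y t| ^+ 2)%:E | f in F])%E]].

Definition online_learnable (V W : normedModType R) (c : R) (F : set (V -> W))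
  : Prop :=
  exists (d : measure_display) (Om : measurableType d) (P : probability Om R)
         (A : learner Om V W),
    valid_learner P c A /\
    exists g : nat -> R,
      [/\ {homo g : m n / (m <= n)%N >-> m <= n},
          (fun n : nat => g n / n%:R) @ \oo --> 0
        & forall T : nat, regret P A c F T = (g T)%:E].

Definition rate_exp (p : \bar R) : R :=
  match p with r%:E => 1 - r^-1 | _ => 1 end.

End Defs.

From Pilot Require Import Defs.
From mathcomp Require Import all_boot all_order all_algebra.
From mathcomp Require Import all_classical all_reals all_analysis.
From mathcomp Require Import ring lra measurable_realfun.
Import Order.TTheory GRing.Theory Num.Theory.
Import numFieldNormedType.Exports.
Local Open Scope classical_set_scope.
Local Open Scope ring_scope.
Set Implicit Arguments. Unset Strict Implicit. Unset Printing Implicit Defensive.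

(* Take orthonormal sequences (e_t) in V and (u_t) in W.  The adversary plays
   x_t = e_t and labels y_t = c u_t or -c u_t, whichever the (randomized)
   prediction misses by at least c in mean square; by the parallelogram law one
   of the two signs always qualifies, so the learner suffers at least c^2 T.
   The operator f = c T^(-1/p) sum_(t < T) <., e_t> y_t / c has T singular
   values equal to c T^(-1/p), hence Schatten p-norm c, and suffers
   T (c - c T^(-1/p))^2.  The difference is at least c^2 T^(1 - 1/p); for
   p = +oo this is c^2 T, which is not sublinear. *)

Section InnerProduct.
Variables (R : realType) (V : normedModType R) (ip : V -> V -> R).
Hypothesis hip : inner_product ip.

Lemma ipC u v : ip u v = ip v u. Proof. by case: hip. Qed.

Lemma ipvv v : ip v v = `|v| ^+ 2. Proof. by case: hip. Qed.

Lemma ipDZl a u v w : ip (a *: u + v) w = a * ip u w + ip v w.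
Proof. by case: hip. Qed.

Lemma ip0l w : ip 0 w = 0.
Proof. by have := ipDZl 1 0 0 w; rewrite scale1r addr0 mul1r; lra. Qed.

Lemma ipDl u v w : ip (u + v) w = ip u w + ip v w.
Proof. by rewrite -[u]scale1r ipDZl scale1r mul1r. Qed.

Lemma ipZl a u w : ip (a *: u) w = a * ip u w.
Proof. by rewrite -[a *: u]addr0 ipDZl ip0l addr0. Qed.

Lemma ipBl u v w : ip (u - v) w = ip u w - ip v w.
Proof. by rewrite ipDl -scaleN1r ipZl mulN1r. Qed.

Lemma ipDr u v w : ip w (u + v) = ip w u + ip w v.
Proof. by rewrite !(ipC w) ipDl. Qed.

Lemma ipZr a u w : ip w (a *: u) = a * ip w u.
Proof. by rewrite !(ipC w) ipZl. Qed.

Lemma ipBr u v w : ip w (u - v) = ip w u - ip w v.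
Proof. by rewrite !(ipC w) ipBl. Qed.

Lemma ip_suml n (F : 'I_n -> V) w :
  ip (\sum_(i < n) F i) w = \sum_(i < n) ip (F i) w.
Proof. exact: (big_morph (ip^~ w) (fun u v => ipDl u v w) (ip0l w)). Qed.

Lemma norm_eq1 v : ip v v = 1 -> `|v| = 1.
Proof.
rewrite ipvv => /eqP; rewrite sqrf_eq1 => /orP[/eqP //|/eqP h].
by have := normr_ge0 v; rewrite h; lra.
Qed.

Lemma norm_ip_unit_le v e : ip e e = 1 -> `|ip v e| <= `|v|.
Proof.
move=> he; set l := ip v e.
have : 0 <= `|v| ^+ 2 - l ^+ 2.
  have -> : `|v| ^+ 2 - l ^+ 2 = ip (v - l *: e) (v - l *: e).
    by rewrite !ipBl !ipBr !ipZl !ipZr he (ipC e v) ipvv -/l; ring.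
  by rewrite ipvv sqr_ge0.
by rewrite subr_ge0 -[l ^+ 2]real_normK ?num_real // ler_pXn2r ?nnegrE.
Qed.

Lemma parallelogram (a b : V) :
  `|a - b| ^+ 2 + `|a + b| ^+ 2 = 2 * `|a| ^+ 2 + 2 * `|b| ^+ 2.
Proof. by rewrite -!ipvv !ipBl !ipDl !ipBr !ipDr (ipC b a); ring. Qed.

Lemma orthonormal_signed (e : nat -> V) (s : nat -> R) :
  Defs.orthonormal ip e -> (forall t, s t = 1 \/ s t = -1) ->
  Defs.orthonormal ip (fun t => s t *: e t).
Proof.
move=> he s_pm i j; rewrite ipZl ipZr he.
have [<-|_] := eqVneq i j; last by rewrite !mulr0.
by rewrite mulr1; case: (s_pm i) => ->; rewrite ?mulrNN mulr1.
Qed.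

End InnerProduct.

Section CourseOfValues.
Variables (T : Type) (x0 : T) (step : (nat -> T) -> nat -> T).

(* Course-of-values recursion: [step f n] may inspect every [f i] with [i < n]. *)
Fixpoint cov_prefix n : nat -> T :=
  match n with
  | 0 => fun _ => x0
  | n.+1 => fun i => if (i < n)%N then cov_prefix n i else step (cov_prefix n) n
  end.

Definition cov_seq i := cov_prefix i.+1 i.

Lemma cov_prefixE n i : (i < n)%N -> cov_prefix n i = cov_seq i.
Proof.
elim: n => // n IH; rewrite ltnS leq_eqVlt => /orP[/eqP ->|hi] /=.
  by rewrite /cov_seq /= ltnn.
by rewrite hi IH.
Qed.

Hypothesis step_causal : forall f g n,
  (forall i, (i < n)%N -> f i = g i) -> step f n = step g n.

Lemma cov_seqE n : cov_seq n = step cov_seq n.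
Proof. by rewrite /cov_seq /= ltnn; apply: step_causal => i; exact: cov_prefixE. Qed.

End CourseOfValues.

Section GramSchmidt.
Variables (R : realType) (V : completeNormedModType R) (ip : V -> V -> R).
Hypotheses (hip : inner_product ip) (infV : infinite_dimensional V).

Definition gs_next n (e : 'I_n -> V) : V :=
  let v := projT1 (cid (infV e)) in
  let w := v - \sum_(i < n) ip v (e i) *: e i in `|w|^-1 *: w.

Lemma gs_next_orth n (e : 'I_n -> V) :
  (forall i j, ip (e i) (e j) = (i == j)%:R) ->
  (forall j, ip (gs_next e) (e j) = 0) /\ ip (gs_next e) (gs_next e) = 1.
Proof.
move=> he; rewrite /gs_next; case: (cid (infV e)) => v hv /=.
set w := v - _.
have ipw j : ip w (e j) = 0.
  rewrite /w ipBl // ip_suml //.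
  under eq_bigr do rewrite ipZl // he.
  by rewrite (bigD1 j) //= eqxx mulr1 big1 ?addr0 ?subrr // => i /negbTE->; rewrite mulr0.
have w0 : w != 0.
  by apply/eqP => w0; apply: (hv (fun i => ip v (e i))); apply/eqP; rewrite -subr_eq0 -/w w0.
split=> [j|]; first by rewrite ipZl // ipw mulr0.
by rewrite ipvv // normrZ normfV normr_id mulVf ?normr_eq0 // expr1n.
Qed.

Definition gs_seq : nat -> V := cov_seq 0 (fun E n => gs_next (fun i : 'I_n => E i)).

Lemma gs_seqE n : gs_seq n = gs_next (fun i : 'I_n => gs_seq i).
Proof.
rewrite /gs_seq cov_seqE // => f g m hfg.
by congr gs_next; apply: funext => i; exact: hfg.
Qed.

Lemma gs_seq_orthonormal : Defs.orthonormal ip gs_seq.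
Proof.
suff H n i j : (i < n)%N -> (j < n)%N -> ip (gs_seq i) (gs_seq j) = (i == j)%:R.
  by move=> i j; apply: (H (maxn i j).+1); rewrite ltnS ?leq_maxl ?leq_maxr.
elim: n i j => // n IH i j.
have [orth_n unit_n] : (forall j, (j < n)%N -> ip (gs_seq n) (gs_seq j) = 0)
                       /\ ip (gs_seq n) (gs_seq n) = 1.
  have [h1 h2] := gs_next_orth (fun i j : 'I_n => IH i j (ltn_ord i) (ltn_ord j)).
  by rewrite gs_seqE; split => // k hk; exact: (h1 (Ordinal hk)).
rewrite !ltnS [(i <= n)%N]leq_eqVlt [(j <= n)%N]leq_eqVlt.
move=> /orP[/eqP -> | hi] /orP[/eqP -> | hj].
- by rewrite eqxx.
- by rewrite orth_n // gtn_eqF.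
- by rewrite ipC // orth_n // ltn_eqF.
- exact: IH.
Qed.

Lemma exists_orthonormal : exists e : nat -> V, Defs.orthonormal ip e.
Proof. by exists gs_seq; exact: gs_seq_orthonormal. Qed.

End GramSchmidt.

Section Zonotope.
Variables (R : realType) (W : normedModType R) (w : nat -> W).

(* The zonotope [{sum_(i < n) l_i w_i : |l_i| <= 1}], built as an iterated
   continuous image of [zonotope n * [-1, 1]]. *)
Fixpoint zonotope n : set W :=
  match n with
  | 0 => [set 0]
  | n.+1 => (fun p : W * R => p.1 + p.2 *: w n) @` (zonotope n `*` `[-1, 1])
  end.

Lemma zonotope_compact n : compact (zonotope n).
Proof.
elim: n => [|n IH] /=; first exact: compact_set1.
apply: continuous_compact; last by apply: compact_setX => //; exact: segment_compact.
apply: continuous_subspaceT => p.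
by apply: continuousD; [exact: cvg_fst | apply: continuousZ; [exact: cvg_snd | exact: cvg_cst]].
Qed.

Lemma zonotope_sum n (l : nat -> R) :
  (forall i, `|l i| <= 1) -> zonotope n (\sum_(i < n) l i *: w i).
Proof.
move=> hl; elim: n => [|n IH] /=; first by rewrite big_ord0.
exists (\sum_(i < n) l i *: w i, l n); last by rewrite big_ord_recr.
by split => //=; rewrite in_itv /= -ler_norml.
Qed.

Lemma compact_closure_zonotope n (S : set W) :
  S `<=` zonotope n -> compact (closure S).
Proof.
move=> hS; have Zc := @zonotope_compact n.
have Zcl : closed (zonotope n) := compact_closed (@norm_hausdorff _ _) Zc.
apply: (subclosed_compact (@closed_closure _ S) Zc).
by rewrite [X in _ `<=` X](closure_id _).1 //; exact: closure_subset.
Qed.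

End Zonotope.

Section DiagonalOperator.
Variables (R : realType) (V W : normedModType R).
Variables (ipV : V -> V -> R) (ipW : W -> W -> R).
Hypothesis hipV : inner_product ipV.
Variables (e : nat -> V) (u : nat -> W).

Definition diag_op (a : R) (T : nat) (v : V) : W :=
  \sum_(i < T) (a * ipV v (e i)) *: u i.

Definition flat_sv (a : R) (T n : nat) : R := if (n < T)%N then a else 0.

Lemma diag_op_linear a T : linear_op (diag_op a T).
Proof.
move=> k x y; rewrite /diag_op scaler_sumr -big_split /=; apply: eq_bigr => i _.
by rewrite ipDZl // mulrDr scalerDl scalerA mulrCA.
Qed.

Lemma diag_op_compact a T :
  (forall i, ipV (e i) (e i) = 1) -> compact_op (diag_op a T).
Proof.
move=> he; split; first exact: diag_op_linear.
apply: (@compact_closure_zonotope _ _ (fun i => a *: u i) T _) => _ [v hv <-].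
rewrite /diag_op.
under eq_bigr do rewrite mulrC -scalerA.
apply: (@zonotope_sum R W (fun i => a *: u i) T (fun i => ipV v (e i))) => i; exact: le_trans (norm_ip_unit_le hipV v (he i)) hv.
Qed.

Hypotheses (he : Defs.orthonormal ipV e) (hu : Defs.orthonormal ipW u).

Lemma diag_op_singular_values a T :
  0 <= a -> singular_values ipV ipW (diag_op a T) (flat_sv a T).
Proof.
move=> a0; split; first by move=> n; rewrite /flat_sv; case: ifP.
split.
  move=> n; rewrite /flat_sv; case: ifP => h1; case: ifP => h2 //.
  by rewrite ltnW in h2.
exists e, u; split => // v; apply: cvg_near_cst; near=> N.
have hTN : (T <= N)%N by near: N; exact: nbhs_infty_ge.
rewrite /series /= /diag_op (big_cat_nat (n := T)) //= [X in _ + X]big1_seq ?addr0.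
  by rewrite big_mkord; apply: eq_bigr => i _; rewrite /flat_sv ltn_ord.
move=> i /andP[_]; rewrite mem_index_iota => /andP[hi _].
by rewrite /flat_sv ltnNge hi mul0r scale0r.
Unshelve. all: by end_near.
Qed.

Lemma diag_op_basis a T t : (t < T)%N -> diag_op a T (e t) = a *: u t.
Proof.
move=> ht; rewrite /diag_op (bigD1 (Ordinal ht)) //= he eqxx mulr1 big1 ?addr0 //.
by move=> i /eqP hi; rewrite he eq_sym (_ : _ == _ = false) ?mulr0 ?scale0r //;
   apply/negbTE/eqP => ti; apply: hi; exact: val_inj.
Qed.

End DiagonalOperator.

Section Rate.
Variables (R : realType) (p : \bar R) (T : nat).
Hypotheses (p_ge1 : (1 <= p)%E) (T_gt0 : (0 < T)%N).

Lemma powR_rate_exp : T%:R `^ rate_exp p = T%:R `^ (rate_exp p - 1) * T%:R :> R.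
Proof.
rewrite -{3}(@powRr1 _ T%:R) ?ler0n // -powRD; first by congr (_ `^ _); ring.
by apply/implyP => _; rewrite pnatr_eq0 -lt0n.
Qed.

Lemma powR_rate_exp1_itv : 0 <= T%:R `^ (rate_exp p - 1) <= (1 : R).
Proof.
rewrite powR_ge0 /= -[X in _ <= X](powRr0 T%:R); apply: ler_powR; first by rewrite ler1n.
case: p p_ge1 => [r||] //=; rewrite lee_fin => hr.
by rewrite (_ : 1 - r^-1 - 1 = - r^-1); [rewrite oppr_le0 invr_ge0; lra | ring].
Qed.

Lemma schatten_flat_sv (c : R) : 0 < c ->
  (schatten_norm p (flat_sv (c * T%:R `^ (rate_exp p - 1)) T) <= c%:E)%E.
Proof.
move=> c0; case: p p_ge1 => [r||] //= hr; last first.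
  apply: ge_ereal_sup => _ [n _ <-]; rewrite lee_fin /flat_sv.
  by case: ifP => _; [rewrite subrr powRr0 mulr1 | exact: ltW].
rewrite lee_fin in hr.
have r0 : r != 0 by apply/eqP => r0; rewrite r0 in hr; lra.
rewrite (_ : 1 - r^-1 - 1 = - r^-1); last by ring.
set a := c * _.
have Tpos : (0 : R) < T%:R by rewrite ltr0n.
have ha : a `^ r = c `^ r * T%:R^-1.
  rewrite /a powRM ?powR_ge0 ?(ltW c0) // -powRrM mulNr mulVf //.
  by rewrite powRN powRr1 // ltW.
rewrite (nneseries_split 0 T); last by move=> k _; rewrite lee_fin powR_ge0.
rewrite add0n [X in (_ + X)%E]eseries0 ?adde0; last first.
  by move=> i hi _; rewrite /flat_sv ltnNge hi /= powR0.
rewrite (eq_big_nat _ _ (F2 := fun _ => (a `^ r)%:E)); last first.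
  by move=> i /andP[_ hi]; rewrite /flat_sv hi.
rewrite sumEFin sumr_const_nat subn0 -mulr_natr ha -mulrA mulVf ?mulr1 ?gt_eqF //.
by rewrite poweR_EFin -powRrM mulfV // powRr1 // ltW.
Qed.

End Rate.

Lemma diag_op_Fp (R : realType) (V W : normedModType R)
  (ipV : V -> V -> R) (ipW : W -> W -> R) (hipV : inner_product ipV)
  (e : nat -> V) (u : nat -> W) (c : R) (p : \bar R) (T : nat) :
  Defs.orthonormal ipV e -> Defs.orthonormal ipW u ->
  0 < c -> (0 < T)%N -> (1 <= p)%E ->
  Fp ipV ipW p c (diag_op ipV e u (c * T%:R `^ (rate_exp p - 1)) T).
Proof.
move=> he hu c0 T0 p1; split; first by apply: diag_op_compact => // i; rewrite he eqxx.
exists (flat_sv (c * T%:R `^ (rate_exp p - 1)) T); split; last exact: schatten_flat_sv.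
apply: diag_op_singular_values => //.
by rewrite mulr_ge0 ?powR_ge0 ?ltW.
Qed.

Section Adversary.
Variables (R : realType) (V W : normedModType R) (ipW : W -> W -> R).
Hypothesis hipW : inner_product ipW.
Variables (d : measure_display) (Om : measurableType d) (P : probability Om R).

Lemma measurable_sqdist (a : Om -> W) (b : W) :
  measurable_fun setT (fun om => `|a om - b|) ->
  measurable_fun setT (fun om => (`|a om - b| ^+ 2)%:E : \bar R).
Proof. by move=> ma; apply/measurable_EFinP; exact: measurable_funX. Qed.

(* For a random prediction [a] one of the two labels [b], [-b] is missed by
   at least [|b|] in mean square, since the two losses average to at least
   [|b|^2] by the parallelogram law. *)
Lemma expected_sqdist_pm (a : Om -> W) (b : W) :
  (forall w, measurable_fun setT (fun om => `|a om - w|)) ->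
  ((`|b| ^+ 2)%:E <= \int[P]_om (`|a om - b| ^+ 2)%:E)%E \/
  ((`|b| ^+ 2)%:E <= \int[P]_om (`|a om + b| ^+ 2)%:E)%E.
Proof.
move=> ma; have mf := measurable_sqdist (ma b).
have mg : measurable_fun setT (fun om => (`|a om + b| ^+ 2)%:E : \bar R).
  by have := measurable_sqdist (ma (- b)); under eq_fun do rewrite opprK.
have hsum : ((2 * `|b| ^+ 2)%:E <= \int[P]_om (`|a om - b| ^+ 2)%:E
      + \int[P]_om (`|a om + b| ^+ 2)%:E)%E.
  rewrite -ge0_integralD //; try by move=> om _; rewrite lee_fin sqr_ge0.
  apply: le_trans (_ : (\int[P]_om (cst (2 * `|b| ^+ 2)%:E om) <= _)%E).
    by rewrite integral_cst // [X in (_ * X)%E]probability_setT mule1.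
  apply: ge0_le_integral => //.
  - by move=> om _; rewrite lee_fin mulr_ge0 ?sqr_ge0.
  - exact: emeasurable_funD.
  - move=> om _; rewrite /cst /= -EFinD lee_fin (parallelogram hipW).
    by rewrite lerDr mulr_ge0 ?sqr_ge0.
case: (boolP ((`|b| ^+ 2)%:E <= \int[P]_om (`|a om - b| ^+ 2)%:E)%E) => [|hlt].
  by left.
rewrite -ltNge in hlt.
right; rewrite leNgt; apply/negP => hlt'.
have := lteD hlt hlt'; rewrite -EFinD => /(le_lt_trans hsum).
by rewrite lte_fin -mulr2n mulr_natl ltxx.
Qed.

Variables (A : learner Om V W) (x : nat -> V) (w : nat -> W).
Hypothesis A_meas : forall h v w, measurable_fun setT (fun om => `|A om h v - w|).

Lemma adversary_signs : exists s : nat -> R,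
  (forall t, s t = 1 \/ s t = -1) /\
  forall t, ((`|w t| ^+ 2)%:E <= \int[P]_om
    (`|A om (history x (fun i => s i *: w i) t) (x t) - s t *: w t| ^+ 2)%:E)%E.
Proof.
pose step (s : nat -> R) t : R :=
  if ((`|w t| ^+ 2)%:E <= \int[P]_om
       (`|A om (history x (fun i => s i *: w i) t) (x t) - w t| ^+ 2)%:E)%E
  then 1 else -1.
have step_causal f g n : (forall i, (i < n)%N -> f i = g i) -> step f n = step g n.
  move=> hfg; rewrite /step.
  have -> // : history x (fun i => f i *: w i) n = history x (fun i => g i *: w i) n.
  rewrite /history; apply/eq_in_map => i; rewrite mem_iota => /andP[_ hi].
  by rewrite hfg.
pose s := cov_seq 1 step.
have sE t : s t = step s t by exact: cov_seqE.
exists s; split => t; rewrite sE /step; first by case: ifP; [left|right].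
set h := history _ _ t.
case: ifP => [|/negbT hmiss]; first by rewrite scale1r.
rewrite scaleN1r opprK.
have [hit|//] := expected_sqdist_pm (w t) (A_meas h (x t)).
by rewrite hit in hmiss.
Qed.

Lemma integral_sum_sqdist_ge (a : nat -> Om -> W) (b : nat -> W) (r : R) T :
  (forall t, measurable_fun setT (fun om => `|a t om - b t|)) ->
  (forall t, (r%:E <= \int[P]_om (`|a t om - b t| ^+ 2)%:E)%E) ->
  ((r *+ T)%:E <= \int[P]_om (\sum_(t < T) `|a t om - b t| ^+ 2)%:E)%E.
Proof.
move=> ma hr; under eq_integral => om _ do rewrite -sumEFin.
rewrite ge0_integral_sum //; last by move=> t; exact: measurable_sqdist.
rewrite -[in X in (X <= _)%E](card_ord T) -sumr_const -sumEFin.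
by apply: lee_sum => t _; exact: hr.
Qed.

Lemma regret_ge (c : R) (F : set (V -> W)) T (y : nat -> W) (f : V -> W) :
  (forall t, `|x t| <= 1) -> (forall t, `|y t| <= c) -> F f ->
  ((\int[P]_om (\sum_(t < T) `|A om (history x y t) (x t) - y t| ^+ 2)%:E)
   - (\sum_(t < T) `|f (x t) - y t| ^+ 2)%:E <= regret P A c F T)%E.
Proof.
move=> hx hy Ff.
pose J := ereal_inf [set (\sum_(t < T) `|g (x t) - y t| ^+ 2)%:E | g in F].
have hJ : (J <= (\sum_(t < T) `|f (x t) - y t| ^+ 2)%:E)%E.
  by apply: ereal_inf_lbound; exists f.
apply: le_trans (leeB (lexx _) hJ) _.
by apply: ereal_sup_ubound; exists x, y.
Qed.

End Adversary.

Lemma regret_lower_bound (R : realType) (V W : completeNormedModType R)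
  (ipV : V -> V -> R) (ipW : W -> W -> R)
  (hipV : inner_product ipV) (hipW : inner_product ipW)
  (infV : infinite_dimensional V) (infW : infinite_dimensional W)
  (c : R) (c_gt0 : 0 < c) (p : \bar R) (p_ge1 : (1 <= p)%E)
  (T : nat) (T_gt0 : (0 < T)%N) (d : measure_display) (Om : measurableType d)
  (P : probability Om R) (A : learner Om V W) :
  valid_learner P c A ->
  ((c ^+ 2 * (T%:R `^ rate_exp p))%:E <= regret P A c (Fp ipV ipW p c) T)%E.
Proof.
move=> [_ A_meas].
have [e he] := exists_orthonormal hipV infV.
have [u hu] := exists_orthonormal hipW infW.
have norm_e t : `|e t| = 1 by apply: (norm_eq1 hipV); rewrite he eqxx.
have norm_u t : `|u t| = 1 by apply: (norm_eq1 hipW); rewrite hu eqxx.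
have [s [s_pm hs]] := adversary_signs hipW P e (fun t => c *: u t) A_meas.
pose u' t := s t *: u t; pose y t := s t *: (c *: u t).
have y_u' t : y t = c *: u' t by rewrite /y /u' !scalerA mulrC.
have norm_u' t : `|u' t| = 1.
  by rewrite normrZ norm_u mulr1; case: (s_pm t) => ->; rewrite ?normrN normr1.
have norm_y t : `|y t| = c by rewrite y_u' normrZ norm_u' mulr1 gtr0_norm.
set b := T%:R `^ (rate_exp p - 1).
have /andP[b_ge0 b_le1] : 0 <= b <= 1 := powR_rate_exp1_itv p_ge1 T_gt0.
pose f := diag_op ipV e u' (c * b) T.
have Ff : Fp ipV ipW p c f :=
  diag_op_Fp hipV he (orthonormal_signed hipW hu s_pm) c_gt0 T_gt0 p_ge1.
have learner_loss : ((c ^+ 2 *+ T)%:E <=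
    \int[P]_om (\sum_(t < T) `|A om (history e y t) (e t) - y t| ^+ 2)%:E)%E.
  apply: (@integral_sum_sqdist_ge _ _ _ _ _ (fun t om => A om (history e y t) (e t)) y) => t; first exact: A_meas.
  by have := hs t; rewrite normrZ norm_u mulr1 gtr0_norm.
have comparator_loss : \sum_(t < T) `|f (e t) - y t| ^+ 2 = (c - c * b) ^+ 2 *+ T.
  rewrite -[in RHS](card_ord T) -sumr_const; apply: eq_bigr => t _.
  rewrite /f diag_op_basis // y_u' -scalerBl normrZ norm_u' mulr1.
  by rewrite real_normK ?num_real //; ring.
have e_le1 t : `|e t| <= 1 by rewrite norm_e.
have y_lec t : `|y t| <= c by rewrite norm_y.
apply: le_trans (regret_ge P A T e_le1 y_lec Ff).
rewrite comparator_loss; apply: le_trans (leeB learner_loss (lexx _)).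
rewrite -EFinB lee_fin powR_rate_exp // -/b !mulr_natr.
have T_ge0 : (0 : R) <= T%:R by rewrite ler0n.
have b1_ge0 : 0 <= 1 - b by rewrite subr_ge0.
have := mulr_ge0 (mulr_ge0 (sqr_ge0 c) T_ge0) (mulr_ge0 b1_ge0 b_ge0).
nra.
Qed.

Lemma not_sublinear (R : realType) (g : nat -> R) (k : R) : 0 < k ->
  (forall n, (0 < n)%N -> k * n%:R <= g n) -> ~ (fun n => g n / n%:R) @ \oo --> 0.
Proof.
move=> k_gt0 g_ge g_o; have [N _ hN] := cvgr0_norm_lt _ g_o _ k_gt0.
have n_gt0 : (0 : R) < N.+1%:R by rewrite ltr0n.
have hg := g_ge N.+1 isT.
have g_ge0 : 0 <= g N.+1 by apply: le_trans hg; rewrite mulr_ge0 ?ltW.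
have := hN N.+1 (leqnSn N).
rewrite ger0_norm; last by rewrite divr_ge0 // ltW.
by rewrite ltr_pdivrMr // ltNge hg.
Qed.

Unset Implicit Arguments.

Theorem theorem4 (R : realType) (V W : completeNormedModType R)
  (ipV : V -> V -> R) (ipW : W -> W -> R)
  (hipV : inner_product ipV) (hipW : inner_product ipW)
  (sepV : separable V) (sepW : separable W)
  (infV : infinite_dimensional V) (infW : infinite_dimensional W)
  (c : R) (c_gt0 : 0 < c) (p : \bar R) (p_ge1 : (1 <= p)%E) :
  (forall T : nat, (0 < T)%N ->
     forall (d : measure_display) (Om : measurableType d)
            (P : probability Om R) (A : learner Om V W),
       valid_learner P c A ->
       ((c ^+ 2 * (T%:R `^ rate_exp p))%:E
          <= regret P A c (Fp ipV ipW p c) T)%E)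
  /\ ~ online_learnable c (Fp ipV ipW +oo%E c).
Proof.
split=> [T T_gt0 d Om P A hA|]; first exact: regret_lower_bound.
move=> [d [Om [P [A [hA [g [_ g_o regretE]]]]]]].
apply: (not_sublinear (exprn_gt0 2 c_gt0) _ g_o) => T T_gt0.
have := regret_lower_bound hipV hipW infV infW c_gt0 (leey _) T_gt0 hA.
by rewrite regretE lee_fin /= powRr1 ?ler0n.
Qed.
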